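(* Let $\boldsymbol\pi\in\mathcal P^+$ be non-trivial. Then $\mathbf E(V(\boldsymbol\pi))$ is a non-trivial self-extension of $V(\boldsymbol\pi)$, i.e. the short exact sequence $0\to V(\boldsymbol\pi)\to\mathbf E(V(\boldsymbol\pi))\to V(\boldsymbol\pi)\to 0$, $v\mapsto(0,v)$, $(v,w)\mapsto v$, does not split.
   Context: $\hat{\mathbf U}_q$ is the quantum loop algebra of an irreducible reduced root system $R$ (index set $I$, $q\in\mathbb C^\times$ not a root of unity) with Drinfeld generators $x^\pm_{i,r}$ ($r\in\mathbb Z$), $h_{i,s}$ ($s\in\mathbb Z\setminus\{0\}$), $k_i^{\pm1}$. It is $\mathbb Z$-graded by $\mathrm{gr}\,x^\pm_{i,r}=r$, $\mathrm{gr}\,h_{i,s}=s$, $\mathrm{gr}\,k_i^{\pm1}=0$; let $\hat{\mathbf U}_q[r]$ be the degree $r$ piece. $\hat{\mathcal F}$ is the category of finite-dimensional type 1 modules, $\mathcal P^+$ the monoid of $I$-tuples of polynomials with constant term 1 (trivial element: all polynomials equal to 1), and $V(\boldsymbol\pi)$ the simple object of highest $\ell$-weight $\boldsymbol\pi$. For $V\in\hat{\mathcal F}$, $\mathbf E(V)$ is the vector space $V\oplus V$ with $\hat{\mathbf U}_q$-action given by extending linearly $g_r(v,w)=(g_rv,\ rg_rv+g_rw)$ for $g_r\in\hat{\mathbf U}_q[r]$, $v,w\in V$. *)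

From HB Require Import structures.
From mathcomp Require Import all_boot all_order all_algebra all_fingroup.
From mathcomp Require Import complex.
From mathcomp Require Import Rstruct.
Set Implicit Arguments. Unset Strict Implicit. Unset Printing Implicit Defensive.
Import Order.TTheory GRing.Theory Num.Theory.
Local Open Scope ring_scope.

Definition Cx := complex Rdefinitions.R.

(* Cartan data of an irreducible reduced (finite) root system, indexed by I:
   c = Cartan matrix, d = its minimal positive integral symmetrizer
   (d_i c_ij = d_j c_ji, some d_i = 1), finite type = positive definite
   symmetrized matrix, irreducible = indecomposable.                     *)
Definition cartan_finite_irreducible (I : finType) (c : I -> I -> int)
    (d : I -> nat) : Prop :=
  [/\ (forall i, c i i = 2) /\ (forall i j, i != j -> c i j <= 0),
      (forall i, (0 < d i)%N) /\ (exists i, d i = 1%N),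
      (forall i j, (d i)%:Z * c i j = (d j)%:Z * c j i),
      (forall v : I -> rat, (exists i, v i != 0) ->
         0 < \sum_i \sum_j v i * ((d i)%:Z * c i j)%:~R * v j) &
      (exists i : I, True) /\
      (forall J : {set I}, (forall i j, i \in J -> j \notin J -> c i j = 0) ->
         J = set0 \/ J = setT)].

Definition qint (z : Cx) (m : int) : Cx := (z ^ m - z ^ (- m)) / (z - z^-1).
Definition qfact (z : Cx) (m : nat) : Cx := \prod_(1 <= t < m.+1) qint z t%:Z.
Definition qbinom (z : Cx) (m k : nat) : Cx :=
  qfact z m / (qfact z k * qfact z (m - k)).

(* strong recursion on nat: srec f r = f r [:: srec f 0; ...; srec f (r-1)] *)
Fixpoint build (T : Type) (f : nat -> seq T -> T) (r : nat) : seq T :=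
  match r with
  | 0 => [:: f 0%N [::]]
  | r'.+1 => rcons (build f r') (f r (build f r'))
  end.
Definition srec (T : Type) (f : nat -> seq T -> T) (r : nat) : T :=
  last (f 0%N [::]) (build f r).

(* coefficients of the power series P(u)/Q(u) (Q 0 <> 0) *)
Definition sdiv (P Q : nat -> Cx) : nat -> Cx :=
  srec (fun r s => (P r - \sum_(t < r) Q t.+1 * nth 0 s (r - t.+1)) / Q 0%N).

(* A finite-dimensional representation on C^n (column vectors) of the
   quantum loop algebra: images of the Drinfeld generators.
   xg true i r = x^+_{i,r}, xg false i r = x^-_{i,r}, hg i s = h_{i,s}
   (only s <> 0 is used), kg i = k_i, kig i = k_i^{-1}.                 *)
Record qlrep (I : finType) (n : nat) := QLRep {
  xg : bool -> I -> int -> 'M[Cx]_n;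
  hg : I -> int -> 'M[Cx]_n;
  kg : I -> 'M[Cx]_n;
  kig : I -> 'M[Cx]_n }.

Definition sgn (b : bool) : int := if b then 1 else -1.
Definition comm n (A B : 'M[Cx]_n) := A *m B - B *m A.
Definition mprod n (l : seq 'M[Cx]_n) : 'M[Cx]_n := foldr (@mulmx _ n n n) 1%:M l.

Section Rep.
Variables (I : finType) (c : I -> I -> int) (d : I -> nat) (q : Cx).
Definition qq (i : I) : Cx := q ^+ d i.

(* coefficients of K exp(sum_{s>=1} A_s u^s) *)
Definition expcoef n (K : 'M[Cx]_n) (A : nat -> 'M[Cx]_n) : nat -> 'M[Cx]_n :=
  srec (fun r s => if r == 0%N then K else
     (r%:R^-1) *: \sum_(t < r) ((t.+1)%:R *: (A t.+1 *m nth 0 s (r - t.+1)))).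

Variables (n : nat) (V : qlrep I n).

(* psi^+_{i,m}  (zero for m < 0) and psi^-_{i,m} (zero for m > 0):
   sum_r psi^+_{i,r} u^r = k_i exp((q_i - q_i^-1) sum_{s>0} h_{i,s} u^s),
   sum_r psi^-_{i,-r} u^-r = k_i^-1 exp(-(q_i - q_i^-1) sum_{s>0} h_{i,-s} u^-s) *)
Definition psip (i : I) (m : int) : 'M[Cx]_n :=
  if 0 <= m then expcoef (kg V i) (fun s => (qq i - (qq i)^-1) *: hg V i s%:Z) `|m|%N
  else 0.
Definition psim (i : I) (m : int) : 'M[Cx]_n :=
  if m <= 0 then
    expcoef (kig V i) (fun s => - (qq i - (qq i)^-1) *: hg V i (- s%:Z)) `|m|%N
  else 0.

Definition is_rep : Prop :=
  [/\ (forall i, kg V i *m kig V i = 1%:M /\ kig V i *m kg V i = 1%:M)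
      /\ (forall i j, comm (kg V i) (kg V j) = 0),
      (forall i j r, r != 0 -> comm (kg V i) (hg V j r) = 0)
      /\ (forall i j r s, r != 0 -> s != 0 -> comm (hg V i r) (hg V j s) = 0),
      (forall b i j r,
         kg V i *m xg V b j r *m kig V i = (qq i ^ (sgn b * c i j)) *: xg V b j r),
      (forall b i j r s, r != 0 ->
         comm (hg V i r) (xg V b j s)
         = ((sgn b)%:~R * qint (qq i) (r * c i j) / r%:~R) *: xg V b j (r + s))
      /\
      (forall b i j r s,
         xg V b i (r + 1) *m xg V b j s
           - qq i ^ (sgn b * c i j) *: (xg V b j s *m xg V b i (r + 1))
         = qq i ^ (sgn b * c i j) *: (xg V b i r *m xg V b j (s + 1))
           - xg V b j (s + 1) *m xg V b i r)
      /\ (forall i j r s,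
         comm (xg V true i r) (xg V false j s)
         = if i == j then (qq i - (qq i)^-1)^-1 *: (psip i (r + s) - psim i (r + s))
           else 0) &
      (forall b i j, i != j ->
         forall (r : 'I_(`|1 - c i j|%N) -> int) (s : int),
         \sum_(sigma : 'S_(`|1 - c i j|%N))
           \sum_(k < (`|1 - c i j|%N).+1)
             ((-1) ^+ k * qbinom (qq i) `|1 - c i j|%N k) *:
             (mprod [seq xg V b i (r (sigma t)) | t <- take k (enum 'I_(`|1 - c i j|%N))]
              *m xg V b j s
              *m mprod [seq xg V b i (r (sigma t)) | t <- drop k (enum 'I_(`|1 - c i j|%N))])
         = 0)].

Definition type1 : Prop :=
  exists P : 'M[Cx]_n, P \in unitmx /\
  exists lam : 'I_n -> I -> int,
    forall i j, kg V i *m col j P = (qq i ^ lam j i) *: col j P.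

(* subspaces are row spaces of matrices W; vector w (row) corresponds to the
   column w^T, so A w^T = (w A^T)^T. *)
Definition invariant (W : 'M[Cx]_n) : Prop :=
  [/\ (forall b i r, (W *m (xg V b i r)^T <= W)%MS),
      (forall i r, r != 0 -> (W *m (hg V i r)^T <= W)%MS),
      (forall i, (W *m (kg V i)^T <= W)%MS) &
      (forall i, (W *m (kig V i)^T <= W)%MS)].

Definition simple_rep : Prop :=
  (0 < n)%N /\ forall W : 'M[Cx]_n, invariant W -> (W == (0 : 'M[Cx]_n))%MS \/ row_full W.

(* highest l-weight pi (Chari--Pressley convention):
   x^+_{i,r} v = 0, k_i v = q_i^{deg pi_i} v,
   psi^{+-}_i(u) v = q_i^{deg pi_i} pi_i(q_i^{-2} u)/pi_i(u) v
   expanded at u = 0 resp. u = infinity. *)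
Definition lw_plus (pi : I -> {poly Cx}) (i : I) : nat -> Cx :=
  sdiv (fun t => (pi i)`_t * qq i ^- (2 * t)) (fun t => (pi i)`_t).
Definition lw_minus (pi : I -> {poly Cx}) (i : I) : nat -> Cx :=
  let D := (size (pi i)).-1 in
  sdiv (fun t => if (t <= D)%N then (pi i)`_(D - t) * qq i ^- (2 * (D - t)) else 0)
       (fun t => if (t <= D)%N then (pi i)`_(D - t) else 0).

Definition highest_lweight (pi : I -> {poly Cx}) : Prop :=
  exists v : 'cV[Cx]_n,
  [/\ v != 0,
      (forall i r, xg V true i r *m v = 0),
      (forall i, kg V i *m v = (qq i ^+ (size (pi i)).-1) *: v),
      (forall i (r : nat), psip i r%:Z *m v
                           = (qq i ^+ (size (pi i)).-1 * lw_plus pi i r) *: v) &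
      (forall i (r : nat), psim i (- r%:Z) *m v
                           = (qq i ^+ (size (pi i)).-1 * lw_minus pi i r) *: v)].
End Rep.

(* homomorphisms of representations: M : 'M_(n2, n1) maps C^n1 -> C^n2 *)
Definition is_hom (I : finType) n1 n2 (V1 : qlrep I n1) (V2 : qlrep I n2)
    (M : 'M[Cx]_(n2, n1)) : Prop :=
  [/\ (forall b i r, xg V2 b i r *m M = M *m xg V1 b i r),
      (forall i r, r != 0 -> hg V2 i r *m M = M *m hg V1 i r),
      (forall i, kg V2 i *m M = M *m kg V1 i) &
      (forall i, kig V2 i *m M = M *m kig V1 i)].

(* E(V) = V (+) V, g_r (v, w) = (g_r v, r g_r v + g_r w) for g_r of degree r *)
Definition ext n (r : int) (G : 'M[Cx]_n) : 'M[Cx]_(n + n) :=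
  block_mx G 0 (r%:~R *: G) G.

Definition Erep (I : finType) n (V : qlrep I n) : qlrep I (n + n) :=
  QLRep (fun b i r => ext r (xg V b i r)) (fun i r => ext r (hg V i r))
        (fun i => ext 0 (kg V i)) (fun i => ext 0 (kig V i)).

(* v |-> (0, v)  and  (v, w) |-> v *)
Definition Eiota n : 'M[Cx]_(n + n, n) := col_mx 0 1%:M.
Definition Eproj n : 'M[Cx]_(n, n + n) := row_mx 1%:M 0.

From HB Require Import structures.
From mathcomp Require Import all_boot all_order all_algebra all_fingroup.
From mathcomp Require Import complex.
From mathcomp Require Import Rstruct.
Import Order.TTheory GRing.Theory Num.Theory.
Local Open Scope ring_scope.
Set Implicit Arguments. Unset Strict Implicit.

(* A splitting of E(V) has the form v |-> (v, B v), and it intertwines an element g_r of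
   degree r exactly when B g_r - g_r B = r g_r.  Matrices P with B P - P B = r P, r <> 0,
   have 0 as their only eigenvalue: P g(B) = g(B - r) P makes the annihilator in C[X] of a
   P-eigenvector with nonzero eigenvalue stable under X |-> X - r; it contains the
   characteristic polynomial of B, and a nonzero ideal with this stability contains a
   nonzero constant.  Applied to psi^+_{i,r} (r > 0) and the highest-l-weight vector, all
   higher coefficients of pi_i(q_i^-2 u)/pi_i(u) vanish, which forces pi_i = 1 since q is
   not a root of unity. *)

Lemma horner_mx_comp (R : comNzRingType) n (A : 'M[R]_n.+1) (p q : {poly R}) :
  horner_mx A (p \Po q) = horner_mx (horner_mx A q) p.
Proof.
elim/poly_ind: p => [|p c IHp]; first by rewrite comp_poly0 !rmorph0.
rewrite comp_polyD comp_polyM comp_polyX comp_polyC !rmorphD !rmorphM /=.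
by rewrite !horner_mx_C horner_mx_X IHp.
Qed.

Lemma horner_mx_intertwine (R : comNzRingType) m n (P : 'M[R]_(m.+1, n.+1))
    (B : 'M_n.+1) (C : 'M_m.+1) (g : {poly R}) :
  P *m B = C *m P -> P *m horner_mx B g = horner_mx C g *m P.
Proof.
move=> PB; elim/poly_ind: g => [|g c IHg]; first by rewrite !rmorph0 mulmx0 mul0mx.
rewrite !rmorphD !rmorphM /= !horner_mx_X !horner_mx_C -!mulmxE.
by rewrite mulmxDr mulmxDl mulmxA IHg -!mulmxA PB scalar_mxC.
Qed.

Lemma size_sub_lt_lead (R : nzRingType) (p q : {poly R}) :
  p != 0 -> size q = size p -> lead_coef q = lead_coef p ->
  (size (p - q)%R < size p)%N.
Proof.
move=> p0 sq lq; have sp : (0 < size p)%N by rewrite size_poly_gt0.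
rewrite -(prednK sp) ltnS; apply/leq_sizeP => j.
rewrite leq_eqVlt => /orP [/eqP <-|lt_pj]; rewrite coefB.
  by move: lq; rewrite !lead_coefE sq => ->; rewrite subrr.
by rewrite !nth_default ?subrr ?sq // -(prednK sp).
Qed.

Lemma comp_poly_XsubC_fixed_const (R : numDomainType) (g : {poly R}) (a : R) :
  a != 0 -> g \Po ('X - a%:P) = g -> g = (g.[0])%:P.
Proof.
move=> a0 ga; apply/eqP; rewrite -subr_eq0; apply/negPn/negP => g0.
have shift y : g.[y - a] = g.[y] by rewrite -{2}ga horner_comp hornerXsubC.
have roots k : root (g - (g.[0])%:P) (- (k%:R * a)).
  rewrite /root hornerD hornerN hornerC subr_eq0; apply/eqP.
  elim: k => [|k IHk]; first by rewrite mul0r oppr0.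
  by rewrite mulrSr mulrDl mul1r opprD shift.
have size_le : (size (g - (g.[0])%:P)%R <= (size g).+1)%N.
  rewrite (leq_trans (size_polyD _ _)) // size_polyN geq_max leqnSn /=.
  exact: leq_trans (size_polyC_leq1 _) _.
suff : ((size g).+1 < size (g - (g.[0])%:P)%R)%N by rewrite ltnNge size_le.
rewrite -[X in (X < _)%N](size_mkseq (fun k => - (k%:R * a))).
apply: max_poly_roots g0 _ _; first by apply/allP => x /mapP [k _ ->].
apply: mkseq_uniq => k l /eqP.
by rewrite eqr_opp (inj_eq (mulIf a0)) eqr_nat => /eqP.
Qed.

Lemma ad_eigenvector_eigenvalue_eq0 (R : numFieldType) n (a lam : R)
    (P B : 'M[R]_n) (v : 'cV[R]_n) :
  a != 0 -> B *m P - P *m B = a *: P -> v != 0 -> P *m v = lam *: v -> lam = 0.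
Proof.
case: n P B v => [|n] P B v a0 adBP; first by rewrite (flatmx0 v) eqxx.
move=> v0 Pv; apply/eqP; apply: contraT => lam0.
have PB : P *m B = (B - a%:M) *m P.
  by rewrite mulmxBl mul_scalar_mx -adBP opprB addrC subrK.
have ann_shift g : horner_mx B g *m v = 0 ->
    horner_mx B (g \Po ('X - a%:P)) *m v = 0.
  move=> gv; rewrite horner_mx_comp rmorphB /= horner_mx_X horner_mx_C.
  have : lam *: (horner_mx (B - a%:M) g *m v) = 0.
    by rewrite scalemxAr -Pv mulmxA -(horner_mx_intertwine _ PB) -mulmxA gv mulmx0.
  by move/eqP; rewrite scaler_eq0 (negbTE lam0) => /eqP.
have ann_eq0 k (g : {poly R}) : (size g <= k)%N -> horner_mx B g *m v = 0 -> g = 0.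
  elim: k g => [|k IHk] g; first by rewrite leqn0 size_poly_eq0 => /eqP.
  move=> sgk gv; have [//|g0] := eqVneq g 0.
  have g_shift : g \Po ('X - a%:P) = g.
    apply/eqP; rewrite eq_sym -subr_eq0; apply/eqP/IHk.
      rewrite -ltnS (leq_trans _ sgk) // size_sub_lt_lead ?size_comp_poly2 ?size_XsubC //.
      by rewrite lead_coef_comp ?size_XsubC // lead_coefXsubC expr1n mulr1.
    by rewrite rmorphB /= mulmxBl gv ann_shift // subrr.
  move: gv g0; rewrite (comp_poly_XsubC_fixed_const a0 g_shift) horner_mx_C.
  by rewrite mul_scalar_mx => /eqP; rewrite scaler_eq0 (negbTE v0) orbF => /eqP ->.
have := ann_eq0 _ (char_poly B) (leqnn _); rewrite Cayley_Hamilton mul0mx.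
by move/(_ erefl)/eqP; rewrite (negbTE (monic_neq0 (char_poly_monic B))).
Qed.

Lemma srecE (T : Type) (f : nat -> seq T -> T) r :
  srec f r = f r (mkseq (srec f) r).
Proof.
have build_mkseq k : build f k = mkseq (srec f) k.+1.
  elim: k => [|k IHk] //=.
  by rewrite mkseqS -IHk /srec /= last_rcons.
by rewrite /srec; case: r => [|r] //=; rewrite last_rcons build_mkseq.
Qed.

Lemma sdivE (P Q : nat -> Cx) r :
  sdiv P Q r = (P r - \sum_(t < r) Q t.+1 * sdiv P Q (r - t.+1)) / Q 0%N.
Proof.
rewrite /sdiv srecE -/(sdiv P Q); congr ((_ - _) / _); apply: eq_bigr => t _.
by rewrite nth_mkseq // ltn_subrL (leq_ltn_trans _ (ltn_ord t)).
Qed.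

Lemma expcoefE n (K : 'M[Cx]_n) (A : nat -> 'M[Cx]_n) r :
  expcoef K A r = if r == 0%N then K else
    r%:R^-1 *: \sum_(t < r) (t.+1%:R *: (A t.+1 *m expcoef K A (r - t.+1))).
Proof.
rewrite /expcoef srecE -/(expcoef K A); case: eqP => // _.
congr (_ *: _); apply: eq_bigr => t _.
by rewrite nth_mkseq // ltn_subrL (leq_ltn_trans _ (ltn_ord t)).
Qed.

Lemma expcoef_rel n1 n2 (Rel : int -> 'M[Cx]_n1 -> 'M[Cx]_n2 -> Prop)
    (K1 : 'M[Cx]_n1) (K2 : 'M[Cx]_n2) A1 A2 :
  (forall r, Rel r 0 0) ->
  (forall r X1 X2 Y1 Y2, Rel r X1 Y1 -> Rel r X2 Y2 -> Rel r (X1 + X2) (Y1 + Y2)) ->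
  (forall r a X Y, Rel r X Y -> Rel r (a *: X) (a *: Y)) ->
  (forall r s X1 X2 Y1 Y2,
     Rel r X1 Y1 -> Rel s X2 Y2 -> Rel (r + s) (X1 *m X2) (Y1 *m Y2)) ->
  Rel 0 K1 K2 -> (forall s : nat, Rel s.+1%:Z (A1 s.+1) (A2 s.+1)) ->
  forall r : nat, Rel r%:Z (expcoef K1 A1 r) (expcoef K2 A2 r).
Proof.
move=> Rel0 RelD RelZ RelM RelK RelA; elim/ltn_ind=> r IHr.
rewrite !expcoefE; case: eqP => [->|_] //; apply: (RelZ).
apply: (big_ind2 (Rel r%:Z)) => [|X1 Y1 X2 Y2|t _]; [exact: Rel0|exact: RelD|].
apply: (RelZ); have ltr : (t < r)%N := ltn_ord t.
have -> : r%:Z = t.+1%:Z + (r - t.+1)%N by rewrite -PoszD subnKC.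
by apply: (RelM); [exact: RelA|apply: IHr; rewrite ltn_subrL (leq_ltn_trans _ ltr)].
Qed.

Lemma extM n r s (A B : 'M[Cx]_n) : ext r A *m ext s B = ext (r + s) (A *m B).
Proof.
rewrite /ext mulmx_block !mulmx0 !mul0mx !addr0 !add0r -scalemxAl -scalemxAr.
by rewrite rmorphD /= scalerDl.
Qed.

Lemma extD n r (A B : 'M[Cx]_n) : ext r (A + B) = ext r A + ext r B.
Proof. by rewrite /ext add_block_mx addr0 scalerDr. Qed.

Lemma ext0 n r : ext r (0 : 'M[Cx]_n) = 0.
Proof. by rewrite /ext scaler0 block_mx0. Qed.

Lemma extZ n r a (A : 'M[Cx]_n) : ext r (a *: A) = a *: ext r A.
Proof. by rewrite /ext scale_block_mx scaler0 !scalerA mulrC. Qed.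

Lemma extB n r (A B : 'M[Cx]_n) : ext r (A - B) = ext r A - ext r B.
Proof. by rewrite extD -scaleN1r extZ scaleN1r. Qed.

Lemma ext1 n : ext 0 (1%:M : 'M[Cx]_n) = 1%:M.
Proof. by rewrite /ext scale0r -scalar_mx_block. Qed.

Lemma ext_sum n r (J : Type) (l : seq J) (P : pred J) (F : J -> 'M[Cx]_n) :
  ext r (\sum_(j <- l | P j) F j) = \sum_(j <- l | P j) ext r (F j).
Proof. exact: (big_morph (ext r) (@extD n r) (@ext0 n r)). Qed.

Lemma ext_comm n r s (A B : 'M[Cx]_n) :
  comm (ext r A) (ext s B) = ext (r + s) (comm A B).
Proof. by rewrite /comm !extM extB [s + r]addrC. Qed.

Lemma ext_mprod n (T : Type) (l : seq T) (deg : T -> int) (F : T -> 'M[Cx]_n) :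
  mprod [seq ext (deg t) (F t) | t <- l]
  = ext (\sum_(t <- l) deg t) (mprod [seq F t | t <- l]).
Proof.
elim: l => [|t l IHl] /=; first by rewrite big_nil ext1.
by rewrite /mprod /= -/(mprod _) IHl extM big_cons.
Qed.

Lemma ext_serre_monomial n m (X : int -> 'M[Cx]_n) (Y : 'M_n) (r : 'I_m -> int) s
    (sigma : 'S_m) k :
  let Xs l := [seq X (r (sigma t)) | t <- l] in
  mprod [seq ext (r (sigma t)) (X (r (sigma t))) | t <- take k (enum 'I_m)] *m ext s Y
    *m mprod [seq ext (r (sigma t)) (X (r (sigma t))) | t <- drop k (enum 'I_m)]
  = ext (\sum_t r t + s)
      (mprod (Xs (take k (enum 'I_m))) *m Y *m mprod (Xs (drop k (enum 'I_m)))).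
Proof.
rewrite /= !(ext_mprod _ (fun t => r (sigma t))) !extM addrAC -big_cat cat_take_drop.
by rewrite big_enum [in RHS](reindex_inj (@perm_inj _ sigma)).
Qed.

Section ErepSeries.
Variables (I : finType) (d : I -> nat) (q : Cx) (n : nat) (V : qlrep I n).

Lemma psip_Erep i m : psip d q (Erep V) i m = ext m (psip d q V i m).
Proof.
rewrite /psip; case: ifP => [|_]; last by rewrite ext0.
case: m => // k _ /=.
apply: (@expcoef_rel n (n + n) (fun r X Y => Y = ext r X)) => //=.
- by move=> r; rewrite ext0.
- by move=> r X1 X2 Y1 Y2 -> ->; rewrite extD.
- by move=> r a X Y ->; rewrite extZ.
- by move=> r s X1 X2 Y1 Y2 -> ->; rewrite extM.
- by move=> s; rewrite extZ.
Qed.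

Lemma psim_Erep i m : psim d q (Erep V) i m = ext m (psim d q V i m).
Proof.
rewrite /psim; case: ifP => [|_]; last by rewrite ext0.
case: m => [k|k] /=.
  by rewrite lez_nat leqn0 => /eqP -> /=; rewrite !expcoefE.
move=> _; rewrite NegzE.
apply: (@expcoef_rel n (n + n) (fun r X Y => Y = ext (- r) X)) => //=.
- by move=> r; rewrite ext0.
- by move=> r X1 X2 Y1 Y2 -> ->; rewrite extD.
- by move=> r a X Y ->; rewrite extZ.
- by move=> r s X1 X2 Y1 Y2 -> ->; rewrite extM opprD.
- by move=> s; rewrite extZ.
Qed.

End ErepSeries.

Lemma is_rep_Erep (I : finType) c d q n (V : qlrep I n) :
  is_rep c d q V -> is_rep c d q (Erep V).
Proof.
move=> [[kk kc] [kh hh] kx [hx [xx xpm]] serre]; split=> /=.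
- split=> [i|i j]; last by rewrite ext_comm kc ext0.
  by case: (kk i) => kki kik; rewrite !extM addr0 kki kik ext1.
- split=> [i j r r0|i j r s r0 s0]; by rewrite ext_comm ?kh ?hh // ext0.
- by move=> b i j r; rewrite !extM add0r addr0 kx extZ.
- split; [|split].
  + by move=> b i j r s r0; rewrite ext_comm hx // extZ.
  + move=> b i j r s; rewrite !extM.
    have -> : s + (r + 1) = r + 1 + s by rewrite addrC.
    have -> : r + (s + 1) = r + 1 + s by rewrite addrA addrAC.
    have -> : s + 1 + r = r + 1 + s by rewrite addrC addrA addrAC.
    by rewrite -!extZ -!extB xx.
  + move=> i j r s; rewrite ext_comm xpm; case: eqP => _; last by rewrite ext0.
    by rewrite psip_Erep psim_Erep -extB -extZ.
- move=> b i j ij r s.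
  under eq_bigr => sigma _ do under eq_bigr => k _ do
    rewrite (ext_serre_monomial (xg V b i)) -extZ.
  by under eq_bigr => sigma _ do rewrite -ext_sum; rewrite -ext_sum serre // ext0.
Qed.

Lemma is_hom_Eiota (I : finType) n (V : qlrep I n) : is_hom V (Erep V) (Eiota n).
Proof.
have extEiota r (G : 'M[Cx]_n) : ext r G *m Eiota n = Eiota n *m G.
  rewrite /ext /Eiota mul_block_col mul_col_mx !mulmx0 mul0mx.
  by rewrite ?mulmx1 ?mul1mx ?add0r ?addr0.
by split=> *; apply: extEiota.
Qed.

Lemma is_hom_Eproj (I : finType) n (V : qlrep I n) : is_hom (Erep V) V (Eproj n).
Proof.
have Eproj_ext r (G : 'M[Cx]_n) : G *m Eproj n = Eproj n *m ext r G.
  rewrite /ext /Eproj mul_row_block mul_mx_row !mulmx0 mul0mx.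
  by rewrite ?mulmx1 ?mul1mx ?mul0mx ?addr0.
by split=> *; apply: Eproj_ext.
Qed.

Lemma is_hom_psip (I : finType) d q n1 n2 (V1 : qlrep I n1) (V2 : qlrep I n2)
    (S : 'M[Cx]_(n2, n1)) i m :
  is_hom V1 V2 S -> psip d q V2 i m *m S = S *m psip d q V1 i m.
Proof.
case=> _ Sh Sk _; rewrite /psip; case: ifP => _; last by rewrite mulmx0 mul0mx.
apply: (@expcoef_rel n1 n2 (fun _ X Y => Y *m S = S *m X)) => //=.
- by move=> _; rewrite mulmx0 mul0mx.
- by move=> _ X1 X2 Y1 Y2 E1 E2; rewrite mulmxDl mulmxDr E1 E2.
- by move=> _ a X Y E; rewrite -scalemxAl E scalemxAr.
- by move=> _ _ X1 X2 Y1 Y2 E1 E2; rewrite -mulmxA E2 !mulmxA E1.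
- by move=> s; rewrite -scalemxAl Sh // scalemxAr.
Qed.

Lemma Eproj_section n (S : 'M[Cx]_(n + n, n)) :
  Eproj n *m S = 1%:M -> S = col_mx 1%:M (dsubmx S).
Proof.
by rewrite -{1}(vsubmxK S) /Eproj mul_row_col mul1mx mul0mx addr0 => <-; rewrite vsubmxK.
Qed.

Lemma ext_section_intertwine n r (G B : 'M[Cx]_n) :
  ext r G *m col_mx 1%:M B = col_mx 1%:M B *m G -> B *m G - G *m B = r%:~R *: G.
Proof.
rewrite /ext mul_block_col mul_col_mx !mulmx1 mul0mx addr0 mul1mx.
by case/eq_col_mx => _ /(canRL (addrK _)) ->.
Qed.

Lemma lw_plus_eq0_pi1 (I : finType) d q (pi : I -> {poly Cx}) i :
  (pi i)`_0 = 1 -> (forall t, (0 < t)%N -> qq d q i ^+ t != 1) ->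
  (forall r, (0 < r)%N -> lw_plus d q pi i r = 0) -> pi i = 1.
Proof.
move=> pi0 qi_root lw0.
have lw_at0 : lw_plus d q pi i 0 = 1.
  by rewrite /lw_plus sdivE big_ord0 subr0 expr0 invr1 mulr1 pi0 divr1.
apply/polyP => -[|r]; rewrite coef1 /= ?pi0 //.
have := lw0 r.+1 erefl; rewrite /lw_plus sdivE -/(lw_plus d q pi i) pi0 divr1.
rewrite big_ord_recr /= big1 => [|t _]; last first.
  by rewrite lw0 ?mulr0 // subn_gt0 ltnS.
(* what is left of the recursion is pi_{i,r+1} (q_i^{-2(r+1)} - 1) = 0 *)
rewrite add0r subnn lw_at0 mulr1 => /eqP.
rewrite -{2}(mulr1 (pi i)`_r.+1) -mulrBr mulf_eq0 subr_eq0 invr_eq1.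
case/orP => [/eqP //|/eqP z2r1].
by have := qi_root (2 * r.+1)%N (muln_gt0 _ _); rewrite z2r1 eqxx.
Qed.

Theorem mainTheorem6 (I : finType) (c : I -> I -> int) (d : I -> nat) (q : Cx)
    (pi : I -> {poly Cx}) (n : nat) (V : qlrep I n) :
  cartan_finite_irreducible c d ->
  q != 0 -> (forall m : nat, (0 < m)%N -> q ^+ m != 1) ->
  (forall i, (pi i)`_0 = 1) -> (exists i, pi i != 1) ->
  is_rep c d q V -> type1 d q V -> simple_rep V -> highest_lweight d q V pi ->
  [/\ is_rep c d q (Erep V),
      is_hom V (Erep V) (Eiota n),
      is_hom (Erep V) V (Eproj n) &
      ~ (exists S : 'M[Cx]_(n + n, n),
           is_hom V (Erep V) S /\ Eproj n *m S = 1%:M)].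
Proof.
move=> [_ [d_gt0 _] _ _ _] q0 q_root pi0 [i pi_i] Vrep _ _ [v [v0 _ _ psip_v _]].
split; [exact: is_rep_Erep|exact: is_hom_Eiota|exact: is_hom_Eproj|].
case=> S [S_hom /Eproj_section S_col].
have qi_root t : (0 < t)%N -> qq d q i ^+ t != 1.
  by move=> t0; rewrite /qq -exprM q_root // muln_gt0 d_gt0.
apply/(negP pi_i)/eqP/(lw_plus_eq0_pi1 (pi0 i) qi_root) => r r0.
have := is_hom_psip d q i r S_hom.
rewrite psip_Erep S_col => /ext_section_intertwine adBP.
have := ad_eigenvector_eigenvalue_eq0 _ adBP v0 (psip_v i r).
rewrite pnatr_eq0 -lt0n r0 => /(_ isT)/eqP; rewrite mulf_eq0 expf_eq0.
by rewrite /qq expf_eq0 (negbTE q0) !andbF => /eqP.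
Qed.
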